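(* Let $\Gamma$ be a $k$-regular graph on $n$ vertices and let $g$ be an automorphism of $\Gamma$ with no fixed vertices. Then the number of $1$-factors (perfect matchings) of $\Gamma$ that are mapped onto themselves by $g$ is at most $(8\mathrm{e}k)^{n/4}$.
   Context: A $1$-factor of a graph is a set of edges such that every vertex lies in exactly one of them. A $1$-factor $F$ is fixed by $g$ if $g(F)=F$ as a set of edges. Here $\mathrm{e}$ is Euler's number. *)

From HB Require Import structures.
From mathcomp Require Import all_boot all_order all_algebra all_fingroup.
From mathcomp Require Import all_classical all_reals all_analysis.
Set Implicit Arguments. Unset Strict Implicit. Unset Printing Implicit Defensive.

Definition simple_graph (T : finType) (e : rel T) : Prop :=
  symmetric e /\ irreflexive e.

Definition regular (T : finType) (e : rel T) (k : nat) : Prop :=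
  forall x : T, #|[set y | e x y]| = k.

Definition is_automorphism (T : finType) (e : rel T) (g : {perm T}) : Prop :=
  forall x y : T, e (g x) (g y) = e x y.

(* Edges are represented as 2-element vertex sets {x,y} with x ~ y. *)
Definition is_edge (T : finType) (e : rel T) (E : {set T}) : bool :=
  [exists x, exists y, (E == [set x; y]) && e x y].

Definition one_factor (T : finType) (e : rel T) (F : {set {set T}}) : bool :=
  [forall E in F, is_edge e E] &&
  [forall v, #|[set E in F | v \in E]| == 1%N].

Definition perm_edges (T : finType) (g : {perm T}) (F : {set {set T}})
  : {set {set T}} := [set [set g v | v in E] | E : {set T} in F].

Definition num_fixed_one_factors (T : finType) (e : rel T) (g : {perm T}) : nat :=
  #|[set F : {set {set T}} | one_factor e F && (perm_edges g F == F)]|.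

From HB Require Import structures.
From mathcomp Require Import all_boot all_order all_algebra all_fingroup.
From mathcomp Require Import all_classical all_reals all_analysis.
From mathcomp Require Import zify.
Import Order.TTheory GRing.Theory Num.Theory.
Set Implicit Arguments. Unset Strict Implicit. Unset Printing Implicit Defensive.

(* A 1-factor F fixed by g is the same as a fixed-point-free involution p
   (v |-> its partner in F) commuting with g.  Such a p maps g-orbits to
   g-orbits, and it is determined by its values on one representative of each
   pair of distinct orbits swapped by p: equivariance spreads p along an orbit,
   involutivity then gives it on the partner orbit, and on an orbit of length d
   mapped to itself p can only be g^(d/2).  As g has no fixed points there are
   m <= n/2 orbits, so at most 2^m choices of the representatives and k^(m/2)
   choices of their partners, i.e. at most 2^(n/2) k^(n/4) = (4k)^(n/4) fixed
   1-factors, which is below (8ek)^(n/4). *)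

Lemma double_modn_eq (c d : nat) :
  0 < d -> d %| c.*2 -> ~~ (d %| c) -> (c %% d).*2 = d.
Proof.
move=> d0 d2c dc; have r0 : 0 < c %% d by rewrite lt0n.
have /dvdnP[[|[|q]] Eq] : d %| (c %% d).*2.
- by rewrite /dvdn -muln2 modnMml muln2.
- by lia.
- by lia.
- by have := ltn_pmod c d0; nia.
Qed.

Section PermOrbitReps.
Variables (T : finType) (g : {perm T}).

Lemma porbit_iterP x y : reflect (exists i, y = iter i g x) (y \in porbit g x).
Proof.
apply: (iffP idP) => [/porbitP[i ->]|[i ->]]; first by exists i; rewrite permX.
by rewrite -permX mem_porbit.
Qed.

Definition orbit_rep x := odflt x [pick y in porbit g x].

Lemma orbit_rep_in x : orbit_rep x \in porbit g x.
Proof.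
by rewrite /orbit_rep; case: pickP => [y -> //|/(_ x)]; rewrite porbit_id.
Qed.

Lemma orbit_rep_eq x y : (orbit_rep x == orbit_rep y) = (x \in porbit g y).
Proof.
have porbit_rep z : porbit g (orbit_rep z) = porbit g z.
  by apply/eqP; rewrite eq_porbit_mem orbit_rep_in.
rewrite -eq_porbit_mem; apply/eqP/eqP => [E|E].
  by rewrite -porbit_rep E porbit_rep.
by rewrite /orbit_rep E; case: pickP => // /(_ y); rewrite porbit_id.
Qed.

Lemma orbit_rep_iter i x : orbit_rep (iter i g x) = orbit_rep x.
Proof. by apply/eqP; rewrite orbit_rep_eq; apply/porbit_iterP; exists i. Qed.

Lemma orbit_rep_id x : orbit_rep (orbit_rep x) = orbit_rep x.
Proof. by apply/eqP; rewrite orbit_rep_eq orbit_rep_in. Qed.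

Lemma iter_porbit_mod x n : iter n g x = iter (n %% #|porbit g x|) g x.
Proof.
rewrite {1}(divn_eq n #|porbit g x|) addnC iterD; congr (iter _ g _).
by elim: (n %/ _) => [//|q IH]; rewrite mulSn iterD IH iter_porbit.
Qed.

Lemma iter_porbit_fix x n : (iter n g x == x) = (#|porbit g x| %| n).
Proof.
have d0 : 0 < #|porbit g x| by rewrite lt0n card_porbit_neq0.
rewrite /dvdn iter_porbit_mod; apply/eqP/eqP => [E|->] //.
have U := uniq_traject_porbit g x.
apply/eqP; rewrite -(nth_uniq x _ _ U) ?size_traject ?ltn_mod //.
by rewrite !nth_traject ?ltn_mod // E.
Qed.

Lemma iter_half_period_uniq x a b :
  iter a.*2 g x = x -> iter a g x != x ->
  iter b.*2 g x = x -> iter b g x != x -> iter a g x = iter b g x.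
Proof.
have d0 : 0 < #|porbit g x| by rewrite lt0n card_porbit_neq0.
move=> /eqP + + /eqP; rewrite !iter_porbit_fix => a2 a1 b2 b1.
rewrite [iter a _ _]iter_porbit_mod [iter b _ _]iter_porbit_mod.
congr (iter _ g x).
by apply: double_inj; rewrite !double_modn_eq.
Qed.

Definition orbit_reps := [set r | orbit_rep r == r].

Lemma card_orbit_reps_fixfree :
  (forall x, g x != x) -> #|orbit_reps|.*2 <= #|T|.
Proof.
move=> gfree; rewrite -addnn -{2}(card_imset orbit_reps (@perm_inj _ g)).
have /eqP <- :
    #|orbit_reps :|: g @: orbit_reps| == #|orbit_reps| + #|g @: orbit_reps|.
  rewrite (leq_card_setU _ _).2 -setI_eq0; apply/eqP/setP => x.
  rewrite !inE; apply/andP => -[/eqP xrep /imsetP[y]].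
  rewrite inE => /eqP yrep gy; have := orbit_rep_iter 1 y.
  by rewrite /= -gy xrep yrep => xy; move: (gfree y); rewrite -gy xy eqxx.
exact: max_card.
Qed.

Definition equivariant_matching (p : T -> T) :=
  [/\ involutive p, forall x, p x != x & forall x, p (g x) = g (p x)].

(* Of two distinct orbits swapped by [p], the one whose representative comes
   first in [enum T]. *)
Definition lower_reps (p : T -> T) :=
  [set r in orbit_reps | enum_rank r < enum_rank (orbit_rep (p r))].

Section EquivariantMatching.
Variable p : T -> T.
Hypothesis pP : equivariant_matching p.

Lemma matching_iter i x : p (iter i g x) = iter i g (p x).
Proof. by case: pP => _ _ pg; elim: i => [|i IH] //=; rewrite pg IH. Qed.

Lemma orbit_rep_matching_rep x : orbit_rep (p (orbit_rep x)) = orbit_rep (p x).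
Proof.
have /porbit_iterP[i ->] := orbit_rep_in x.
by rewrite matching_iter orbit_rep_iter.
Qed.

Lemma orbit_rep_matchingK x : orbit_rep (p (orbit_rep (p x))) = orbit_rep x.
Proof. by case: pP => pK _ _; rewrite orbit_rep_matching_rep pK. Qed.

Lemma upper_rep_lower r : r \in orbit_reps -> r \notin lower_reps p ->
  orbit_rep (p r) != r -> orbit_rep (p r) \in lower_reps p.
Proof.
rewrite !inE => /eqP rrep; rewrite rrep eqxx /= -leqNgt leq_eqVlt => /orP[|].
  by move/eqP/ord_inj/enum_rank_inj => ->; rewrite eqxx.
by move=> lt _; rewrite orbit_rep_id eqxx orbit_rep_matchingK rrep.
Qed.

Lemma card_lower_reps : #|lower_reps p|.*2 <= #|orbit_reps|.
Proof.
set L := lower_reps p.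
have LR : L \subset orbit_reps.
  by apply/fintype.subsetP => r; rewrite inE => /andP[].
rewrite -(cardsID L orbit_reps) (finset.setIidPr LR) -addnn leq_add2l.
have <- : #|[set orbit_rep (p r) | r in L]| = #|L|.
  apply: card_in_imset => r s.
  rewrite !inE => /andP[/eqP rrep _] /andP[/eqP srep _] E.
  by rewrite -rrep -srep -orbit_rep_matchingK E orbit_rep_matchingK.
apply/subset_leq_card/fintype.subsetP => _ /imsetP[r + ->].
rewrite !inE => /andP[/eqP rrep lt].
by rewrite orbit_rep_id eqxx orbit_rep_matchingK rrep -leqNgt ltnW.
Qed.

End EquivariantMatching.

Section TwoMatchings.
Variables p1 p2 : T -> T.
Hypotheses (p1P : equivariant_matching p1) (p2P : equivariant_matching p2).

Lemma matching_eq_porbit s : p1 s = p2 s -> {in porbit g s, p1 =1 p2}.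
Proof. by move=> E _ /porbit_iterP[i ->]; rewrite !matching_iter // E. Qed.

Lemma matching_eq_porbit_partner s :
  p1 s = p2 s -> {in porbit g (p1 s), p1 =1 p2}.
Proof.
case: p1P p2P => [p1K _ _] [p2K _ _] E _ /porbit_iterP[i ->].
by rewrite [in RHS]E !matching_iter // p1K p2K.
Qed.

Lemma matching_eq_self_matched x :
  p1 x \in porbit g x -> p2 x \in porbit g x -> p1 x = p2 x.
Proof.
case: p1P p2P => [p1K p1x _] [p2K p2x _].
move=> /porbit_iterP[a Ea] /porbit_iterP[b Eb].
rewrite Ea Eb; apply: iter_half_period_uniq; rewrite -?Ea -?Eb //.
- by rewrite -addnn iterD -Ea -matching_iter // -Ea p1K.
- by rewrite -addnn iterD -Eb -matching_iter // -Eb p2K.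
Qed.

Hypothesis Eon : {in lower_reps p1, p1 =1 p2}.

Lemma matching_eq_upper_orbit r : r \in orbit_reps -> r \notin lower_reps p1 ->
  orbit_rep (p1 r) != r -> {in porbit g r, p1 =1 p2}.
Proof.
move=> rR rL sr x xr; set s := orbit_rep (p1 r).
have sL : s \in lower_reps p1 by apply: upper_rep_lower.
apply: (matching_eq_porbit_partner (Eon sL)).
move: rR xr; rewrite inE -!orbit_rep_eq => /eqP rrep /eqP ->.
by rewrite /s orbit_rep_matchingK // rrep.
Qed.

End TwoMatchings.

Lemma equivariant_matching_eq p1 p2 :
  equivariant_matching p1 -> equivariant_matching p2 ->
  lower_reps p1 = lower_reps p2 -> {in lower_reps p1, p1 =1 p2} -> p1 =1 p2.
Proof.
move=> p1P p2P EL Eon x; set r := orbit_rep x.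
have rR : r \in orbit_reps by rewrite inE orbit_rep_id.
have xr : x \in porbit g r by rewrite -orbit_rep_eq orbit_rep_id.
have [rL|rL] := boolP (r \in lower_reps p1).
  exact: (matching_eq_porbit p1P p2P (Eon r rL) xr).
have [s1|s1] := eqVneq (orbit_rep (p1 r)) r; last first.
  exact: (matching_eq_upper_orbit p1P p2P Eon rR rL s1 xr).
have [s2|s2] := eqVneq (orbit_rep (p2 r)) r; last first.
  have Eon' : {in lower_reps p2, p2 =1 p1} by move=> y; rewrite -EL => /Eon ->.
  symmetry; apply: (matching_eq_upper_orbit p2P p1P Eon' rR _ s2 xr).
  by rewrite -EL.
have self p : orbit_rep (p r) = r -> p r \in porbit g r.
  by move=> pr; rewrite -orbit_rep_eq pr orbit_rep_id.
apply: (matching_eq_porbit p1P p2P _ xr).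
exact: matching_eq_self_matched (self _ s1) (self _ s2).
Qed.

End PermOrbitReps.

Section OneFactors.
Variables (T : finType) (e : rel T).
Hypothesis eP : simple_graph e.

Lemma is_edge_set2 v w : is_edge e [set v; w] -> e v w.
Proof.
case: eP => esym eirr /existsP[x /existsP[y /andP[/eqP E exy]]].
wlog vx : x y exy E / v = x.
  move=> IH; have : v \in [set x; y] by rewrite -E set21.
  rewrite !inE => /orP[/eqP vx|/eqP vy]; first exact: IH exy E vx.
  by apply: (IH y x) vy; rewrite 1?esym // E finset.setUC.
have : y \in [set v; w] by rewrite E set22.
by rewrite !inE vx => /orP[/eqP yx|/eqP <- //]; rewrite yx eirr in exy.
Qed.

Variable F : {set {set T}}.
Hypothesis FP : one_factor e F.

Definition partner v := odflt v [pick w | [set v; w] \in F].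

Lemma one_factor_is_edge E : E \in F -> is_edge e E.
Proof. by case/andP: FP => /forall_inP FE _ /FE. Qed.

Lemma one_factor_edge_uniq v : exists E0, [set E in F | v \in E] = [set E0].
Proof. by case/andP: FP => _ /forallP /(_ v) /cards1P. Qed.

Lemma one_factor_edge_eq E1 E2 v :
  E1 \in F -> E2 \in F -> v \in E1 -> v \in E2 -> E1 = E2.
Proof.
have [E0 E0P] := one_factor_edge_uniq v => E1F E2F vE1 vE2.
have : E1 \in [set E in F | v \in E] by rewrite inE E1F vE1.
have : E2 \in [set E in F | v \in E] by rewrite inE E2F vE2.
by rewrite E0P !inE => /eqP -> /eqP ->.
Qed.

Lemma partner_edge v : [set v; partner v] \in F.
Proof.
rewrite /partner; case: pickP => [w -> //|noedge].
have [E0 E0P] := one_factor_edge_uniq v.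
have : E0 \in [set E in F | v \in E] by rewrite E0P set11.
rewrite inE => /andP[E0F vE0].
have /existsP[x /existsP[y /andP[/eqP E0xy _]]] := one_factor_is_edge E0F.
move: vE0; rewrite E0xy !inE => /orP[] /eqP vE; subst v.
  by move: (noedge y); rewrite -E0xy E0F.
by move: (noedge x); rewrite finset.setUC -E0xy E0F.
Qed.

Lemma adj_partner v : e v (partner v).
Proof. exact/is_edge_set2/one_factor_is_edge/partner_edge. Qed.

Lemma partner_neq v : partner v != v.
Proof.
by case: eP => _ eirr; apply: contraTneq (adj_partner v) => ->; rewrite eirr.
Qed.

Lemma partner_eq v w : [set v; w] \in F -> partner v = w.
Proof.
move=> vwF.
have E := one_factor_edge_eq vwF (partner_edge v) (set21 v w) (set21 v _).
have : w \in [set v; partner v] by rewrite -E set22.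
rewrite !inE => /orP[/eqP wv|/eqP //]; subst w.
case: eP => _ eirr.
by have := is_edge_set2 (one_factor_is_edge vwF); rewrite eirr.
Qed.

Lemma partnerK : involutive partner.
Proof. by move=> v; apply: partner_eq; rewrite finset.setUC partner_edge. Qed.

Lemma one_factor_partnerE : F = [set [set v; partner v] | v : T].
Proof.
apply/setP=> E; apply/idP/imsetP=> [EF|[v _ ->]]; last exact: partner_edge.
have /existsP[x /existsP[y /andP[/eqP Exy _]]] := one_factor_is_edge EF.
exists x => //; apply: (one_factor_edge_eq (v := x) EF (partner_edge x)).
  by rewrite Exy set21.
exact: set21.
Qed.

Lemma partner_equivariant (g : {perm T}) :
  perm_edges g F = F -> equivariant_matching g partner.
Proof.
move=> gF; split; [exact: partnerK | exact: partner_neq | move=> v].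
apply: partner_eq; rewrite -gF; apply/imsetP; exists [set v; partner v].
  exact: partner_edge.
by rewrite imsetU1 imset_set1.
Qed.

End OneFactors.

Lemma leq_card_bigcup (I U : finType) (A : {set I}) (B : I -> {set U}) :
  #|\bigcup_(i in A) B i| <= \sum_(i in A) #|B i|.
Proof.
elim/big_rec2: _ => [|i S n _ IH]; first by rewrite cards0.
by rewrite (leq_trans (leq_card_setU _ _).1) // leq_add2l.
Qed.

Section FixedOneFactors.
Variables (T : finType) (e : rel T) (k : nat) (g : {perm T}).
Hypotheses (eP : simple_graph e) (ereg : regular e k).

Definition fixed_one_factors :=
  [set F : {set {set T}} | one_factor e F && (perm_edges g F == F)].

Definition neighbour_choices (L : {set T}) : {set {ffun T -> T}} :=
  [set q | q \in family
           (fun x => if x \in L then [set y | e x y] else [set x])].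

Lemma card_neighbour_choices L : #|neighbour_choices L| = k ^ #|L|.
Proof.
rewrite cardsE card_family foldrE big_map big_enum /=.
rewrite (eq_bigr (fun x => if x \in L then k else 1)) => [|x _].
  by rewrite -big_mkcond prod_nat_const.
by case: ifP; rewrite ?ereg ?cards1.
Qed.

Definition matching_code (F : {set {set T}}) :=
  (lower_reps g (partner F),
   [ffun x => if x \in lower_reps g (partner F) then partner F x else x]).

Definition matching_codes :=
  \bigcup_(L in [set L in powerset (orbit_reps g) | #|L|.*2 <= #|orbit_reps g|])
    [set (L, q) | q in neighbour_choices L].

Lemma fixed_one_factor_matching F :
  F \in fixed_one_factors -> equivariant_matching g (partner F).
Proof.
by rewrite inE => /andP[FP /eqP gF]; exact: (partner_equivariant eP FP gF).
Qed.

Lemma matching_code_inj : {in fixed_one_factors &, injective matching_code}.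
Proof.
move=> F1 F2 F1fix F2fix [EL Eq].
have Ep : partner F1 =1 partner F2.
  apply: (equivariant_matching_eq (fixed_one_factor_matching F1fix)
           (fixed_one_factor_matching F2fix) EL) => x xL.
  by have := congr1 (fun q : {ffun T -> T} => q x) Eq; rewrite !ffunE -EL xL.
move: F1fix F2fix; rewrite !inE => /andP[F1P _] /andP[F2P _].
rewrite (one_factor_partnerE F1P) (one_factor_partnerE F2P).
by apply: eq_imset => v; rewrite Ep.
Qed.

Lemma matching_code_sub :
  matching_code @: fixed_one_factors \subset matching_codes.
Proof.
apply/fintype.subsetP => _ /imsetP[F Ffix ->].
have pP := fixed_one_factor_matching Ffix.
move: Ffix; rewrite inE => /andP[FP _].
apply/bigcupP; exists (lower_reps g (partner F)).
  rewrite inE powersetE card_lower_reps // andbT.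
  by apply/fintype.subsetP => r; rewrite inE => /andP[].
apply/imsetP; eexists; last reflexivity.
rewrite inE; apply/familyP => x; rewrite ffunE.
by case: ifP; rewrite inE ?(adj_partner eP FP).
Qed.

(* [maxn k 1] because for k = 0 and L = set0, k ^ #|L| <= k ^ m./2 fails. *)
Lemma card_matching_codes :
  #|matching_codes| <= 2 ^ #|orbit_reps g| * maxn k 1 ^ #|orbit_reps g|./2.
Proof.
set m := #|orbit_reps g|; set K := maxn k 1.
apply: (leq_trans (leq_card_bigcup _ _)).
apply: (@leq_trans
  (\sum_(L in [set L in powerset (orbit_reps g) | #|L|.*2 <= m]) K ^ m./2)).
  apply: leq_sum => L; rewrite inE => /andP[_ Lm].
  rewrite (leq_trans (leq_imset_card _ _)) // card_neighbour_choices.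
  have kK : k ^ #|L| <= K ^ #|L|.
    by elim: #|L| => // j IH; rewrite !expnS leq_mul // leq_maxl.
  by rewrite (leq_trans kK) // leq_pexp2l ?leq_maxr // geq_half_double.
rewrite sum_nat_const leq_mul2r -card_powerset; apply/orP; right.
by apply/subset_leq_card/fintype.subsetP => L; rewrite inE => /andP[].
Qed.

Lemma num_fixed_one_factors_le :
  num_fixed_one_factors e g <=
    2 ^ #|orbit_reps g| * maxn k 1 ^ #|orbit_reps g|./2.
Proof.
rewrite /num_fixed_one_factors -/fixed_one_factors.
rewrite -(card_in_imset matching_code_inj).
exact: leq_trans (subset_leq_card matching_code_sub) card_matching_codes.
Qed.

End FixedOneFactors.

Lemma fourth_power_le (N m n K : nat) :
  N <= 2 ^ m * K ^ m./2 -> m.*2 <= n -> 0 < K -> N ^ 4 <= (4 * K) ^ n.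
Proof.
move=> NmK mn K0.
apply: (@leq_trans ((2 ^ m * K ^ m./2) ^ 4)); first by rewrite leq_exp2r.
apply: (@leq_trans ((4 * K) ^ m.*2)); last by rewrite leq_pexp2l // muln_gt0.
have -> : (4 * K) ^ m.*2 = 2 ^ (m * 4) * K ^ m.*2.
  by rewrite expnMn -(@expnM 2 2); congr (2 ^ _ * _); lia.
by rewrite expnMn -!expnM leq_mul // leq_pexp2l //; lia.
Qed.

Local Open Scope ring_scope.

Lemma ler_powR_of_expn4 (R : realType) (N n k : nat) :
  (N ^ 4 <= (4 * k) ^ n)%N ->
  (N%:R : R) <= powR (8 * expR 1 * k%:R) (n%:R / 4).
Proof.
move=> Nnk.
have e1 : (1 : R) <= expR 1 by rewrite -expR0 ler_expR.
have a0 : (0 : R) <= 8 * expR 1 * k%:R by rewrite !mulr_ge0 // expR_ge0.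
rewrite -(@ler_pXn2r _ 4) // ?nnegrE ?powR_ge0 //.
rewrite -(powR_mulrn 4 (powR_ge0 _ _)) -powRrM mulfVK ?pnatr_eq0 //.
rewrite powR_mulrn // -natrX.
apply: (@le_trans _ _ ((4 * k) ^ n)%N%:R); first by rewrite ler_nat.
rewrite natrX natrM lerXn2r ?nnegrE ?mulr_ge0 // ler_wpM2r //.
rewrite -[4 : R]mulr1 -[8 : R]/((4 * 2)%N%:R) natrM -mulrA ler_wpM2l //.
by rewrite (le_trans e1) // ler_peMl ?expR_ge0 // ler1n.
Qed.

Theorem mainTheorem2 (R : realType) (T : finType) (e : rel T) (k : nat)
  (g : {perm T}) :
  simple_graph e -> regular e k -> is_automorphism e g ->
  (forall x : T, g x != x) ->
  ((num_fixed_one_factors e g)%:R : R) <=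
    powR (8 * expR 1 * k%:R) (#|T|%:R / 4).
Proof.
(* Only the g-fixed 1-factors matter, so g need not be an automorphism. *)
move=> eP ereg _ gfree.
have [->|] := posnP (num_fixed_one_factors e g); first by rewrite powR_ge0.
rewrite card_gt0 => /set0Pn[F]; rewrite inE => /andP[FP _].
apply: ler_powR_of_expn4.
have -> : ((4 * k) ^ #|T| = (4 * maxn k 1) ^ #|T|)%N.
  have [->|/card_gt0P[v _]] := posnP #|T|; first by rewrite !expn0.
  rewrite (maxn_idPl _) // -(ereg v) card_gt0; apply/set0Pn.
  by exists (partner F v); rewrite inE (adj_partner eP FP).
apply: fourth_power_le (num_fixed_one_factors_le g eP ereg) _ _.
  exact: card_orbit_reps_fixfree.
exact: leq_maxr.
Qed.
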